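(* Let $\Gamma$ be an oriented Jordan smooth curve, $\alpha$ a diffeomorphism of $\Gamma$ onto itself with a nonempty set of periodic points, $X(\Gamma)$ a rearrangement-invariant space with Boyd indices $\alpha_X,\beta_X$, and $a,b\in C(\Gamma)$. Then for every $i\in\{0,1\}$ and every $k\in\mathbb Z$, $\eta_i^-(t)=\eta_i^-[\alpha_k(t)]$ and $\eta_i^+(t)=\eta_i^+[\alpha_k(t)]$ for all $t\in\Gamma$; hence the sets $\Gamma_j$, $j\in\{1,\dots,5\}$, are $\alpha_k$-invariant.
   Context: $\alpha_n$ are iterates of $\alpha$ ($n\in\mathbb Z$). $m$ is the common multiplicity of periodic points if $\alpha$ preserves orientation, $m=2$ if it changes orientation; $\Phi=\overline{\{t:\alpha_m(t)\ne t\}}$; $f_m(t)=\prod_{i=0}^{m-1}f[\alpha_i(t)]$. $\eta_0(t)=|a_m(t)|-|b_m(t)|\min\{|\alpha_m'(t)|^{-\alpha_X},|\alpha_m'(t)|^{-\beta_X}\}$, $\eta_1(t)=|a_m(t)|-|b_m(t)|\max\{|\alpha_m'(t)|^{-\alpha_X},|\alpha_m'(t)|^{-\beta_X}\}$, $\eta_i^\pm(t)=\lim_{n\to\pm\infty}\eta_i[\alpha_{mn}(t)]$. $\Gamma_1=\Gamma\setminus\Phi$, $\Gamma_2=\{t\in\Phi:\eta_1^-(t)>0,\eta_1^+(t)>0\}$, $\Gamma_3=\{t\in\Phi:\eta_0^-(t)<0,\eta_0^+(t)<0\}$, $\Gamma_4=\{t\in\Phi:\eta_0^+(t)<0<\eta_1^-(t)\}$,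 $\Gamma_5=\{t\in\Phi:\eta_0^-(t)<0<\eta_1^+(t)\}$. *)

From Stdlib Require Import Reals ZArith.
From Coquelicot Require Import Coquelicot.

Open Scope R_scope.

(* Gamma is the image of gam : R -> C, 1-periodic, C^1 with nonvanishing
   derivative, injective on [0,1): an oriented Jordan smooth curve, the
   orientation being the one given by increasing parameter. *)
Definition jordan_smooth_param (gam : R -> C) : Prop :=
  (forall s, gam (s + 1) = gam s) /\
  (forall s, ex_derive (fun u => fst (gam u)) s /\
             ex_derive (fun u => snd (gam u)) s) /\
  (forall s, continuous (Derive (fun u => fst (gam u))) s /\
             continuous (Derive (fun u => snd (gam u))) s) /\
  (forall s, Derive (fun u => fst (gam u)) s <> 0 \/
             Derive (fun u => snd (gam u)) s <> 0) /\
  (forall s1 s2, 0 <= s1 < 1 -> 0 <= s2 < 1 -> gam s1 = gam s2 -> s1 = s2).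

Definition curve (gam : R -> C) : C -> Prop := fun z => exists s, gam s = z.

Definition pos_ordered (gam : R -> C) (z1 z2 z3 : C) : Prop :=
  exists s1 s2 s3, s1 < s2 < s3 /\ s3 < s1 + 1 /\
    gam s1 = z1 /\ gam s2 = z2 /\ gam s3 = z3.

Definition preserves_orientation (gam : R -> C) (alpha : C -> C) : Prop :=
  forall z1 z2 z3, pos_ordered gam z1 z2 z3 ->
    pos_ordered gam (alpha z1) (alpha z2) (alpha z3).

Definition changes_orientation (gam : R -> C) (alpha : C -> C) : Prop :=
  forall z1 z2 z3, pos_ordered gam z1 z2 z3 ->
    pos_ordered gam (alpha z3) (alpha z2) (alpha z1).

Definition curve_deriv (G : C -> Prop) (f : C -> C) (t d : C) : Prop :=
  filterlim (fun tau => Cdiv (Cminus (f tau) (f t)) (Cminus tau t))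
    (within (fun tau => G tau /\ tau <> t) (locally t)) (locally d).

Definition cont_on (G : C -> Prop) (f : C -> C) : Prop :=
  forall t, G t -> filterlim f (within G (locally t)) (locally (f t)).

Definition diffeo_on (G : C -> Prop) (alpha alpha_inv : C -> C) : Prop :=
  (forall t, G t -> G (alpha t)) /\ (forall t, G t -> G (alpha_inv t)) /\
  (forall t, G t -> alpha_inv (alpha t) = t) /\
  (forall t, G t -> alpha (alpha_inv t) = t) /\
  (exists d : C -> C, cont_on G d /\
     forall t, G t -> curve_deriv G alpha t (d t) /\ d t <> 0) /\
  (exists d : C -> C, cont_on G d /\
     forall t, G t -> curve_deriv G alpha_inv t (d t) /\ d t <> 0).

Definition iterz (alpha alpha_inv : C -> C) (k : Z) : C -> C :=
  match k with
  | Z0 => fun t => t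
  | Zpos p => Nat.iter (Pos.to_nat p) alpha
  | Zneg p => Nat.iter (Pos.to_nat p) alpha_inv
  end.

Definition periodic_point (G : C -> Prop) (alpha : C -> C) (t : C) : Prop :=
  G t /\ exists n : nat, (0 < n)%nat /\ Nat.iter n alpha t = t.

Definition multiplicity (alpha : C -> C) (t : C) (n : nat) : Prop :=
  (0 < n)%nat /\ Nat.iter n alpha t = t /\
  forall k, (0 < k < n)%nat -> Nat.iter k alpha t <> t.

Definition is_m (gam : R -> C) (alpha : C -> C) (m : nat) : Prop :=
  (preserves_orientation gam alpha /\
     forall t, periodic_point (curve gam) alpha t -> multiplicity alpha t m) \/
  (changes_orientation gam alpha /\ m = 2%nat).

Definition Phi (G : C -> Prop) (alpha : C -> C) (m : nat) (t : C) : Prop :=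
  forall eps, 0 < eps -> exists tau, G tau /\ Nat.iter m alpha tau <> tau /\
    Cmod (Cminus tau t) < eps.

Fixpoint fm (f alpha : C -> C) (n : nat) (t : C) : C :=
  match n with
  | O => RtoC 1
  | S n' => Cmult (fm f alpha n' t) (f (Nat.iter n' alpha t))
  end.

(* dm stands for the derivative alpha_m' of alpha_m along Gamma *)
Definition eta0 (a b alpha dm : C -> C) (m : nat) (aX bX : R) (t : C) : R :=
  Cmod (fm a alpha m t) - Cmod (fm b alpha m t) *
    Rmin (Rpower (Cmod (dm t)) (- aX)) (Rpower (Cmod (dm t)) (- bX)).

Definition eta1 (a b alpha dm : C -> C) (m : nat) (aX bX : R) (t : C) : R :=
  Cmod (fm a alpha m t) - Cmod (fm b alpha m t) *
    Rmax (Rpower (Cmod (dm t)) (- aX)) (Rpower (Cmod (dm t)) (- bX)).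

Definition eta (i : nat) a b alpha dm m aX bX : C -> R :=
  match i with
  | O => eta0 a b alpha dm m aX bX
  | _ => eta1 a b alpha dm m aX bX
  end.

Definition eta_plus (i : nat) a b alpha alpha_inv dm m aX bX (t : C) : Rbar :=
  Lim_seq (fun n => eta i a b alpha dm m aX bX
                      (iterz alpha alpha_inv (Z.of_nat (m * n)) t)).

Definition eta_minus (i : nat) a b alpha alpha_inv dm m aX bX (t : C) : Rbar :=
  Lim_seq (fun n => eta i a b alpha dm m aX bX
                      (iterz alpha alpha_inv (- Z.of_nat (m * n)) t)).

Definition Gam (j : nat) (gam : R -> C) a b alpha alpha_inv dm m aX bX
    (t : C) : Prop :=
  let G := curve gam in
  let e0p := eta_plus 0 a b alpha alpha_inv dm m aX bX t in
  let e0m := eta_minus 0 a b alpha alpha_inv dm m aX bX t in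
  let e1p := eta_plus 1 a b alpha alpha_inv dm m aX bX t in
  let e1m := eta_minus 1 a b alpha alpha_inv dm m aX bX t in
  match j with
  | 1%nat => G t /\ ~ Phi G alpha m t
  | 2%nat => Phi G alpha m t /\ Rbar_lt (Finite 0) e1m /\ Rbar_lt (Finite 0) e1p
  | 3%nat => Phi G alpha m t /\ Rbar_lt e0m (Finite 0) /\ Rbar_lt e0p (Finite 0)
  | 4%nat => Phi G alpha m t /\ Rbar_lt e0p (Finite 0) /\ Rbar_lt (Finite 0) e1m
  | 5%nat => Phi G alpha m t /\ Rbar_lt e0m (Finite 0) /\ Rbar_lt (Finite 0) e1p
  | _ => False
  end.

(* Let h = alpha_m. It preserves the orientation of Gamma and fixes a point p:
   a periodic point of alpha when alpha preserves orientation, and otherwise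
   (m = 2) a fixed point of the orientation-reversing alpha, obtained from the
   intermediate value theorem. In the arc coordinate starting at p, h and
   h^-1 are increasing, so the orbits h^n t and h^-n t are monotone and
   converge to a fixed point Y of h. As alpha_m' = prod_i alpha'(alpha_i) and
   alpha', a, b are continuous, eta_i is continuous on Gamma and
   eta_i^{+/-}(t) = eta_i(Y). Since alpha commutes with h, the corresponding
   orbit of alpha t converges to alpha Y, and eta_i(alpha Y) = eta_i(Y)
   because the products f_m are invariant under a cyclic shift of an
   h-periodic orbit. Phi is alpha-invariant by continuity and injectivity of
   alpha and its inverse; the case of alpha_k follows by induction on k. *)

From Stdlib Require Import Reals ZArith Lra Lia Ranalysis5 ClassicalEpsilon Classical.
From Coquelicot Require Import Coquelicot.
Open Scope R_scope.

(** * Limits in the plane *)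

Lemma Cmod_minus_sym (x y : C) : Cmod (x - y)%C = Cmod (y - x)%C.
Proof.
  replace (x - y)%C with (- (y - x))%C by ring.
  apply Cmod_opp.
Qed.

Lemma Cmod_minus_triangle (x y z : C) :
  Cmod (x - z)%C <= Cmod (x - y)%C + Cmod (y - z)%C.
Proof.
  replace (x - z)%C with ((x - y) + (y - z))%C by ring.
  apply Cmod_triangle.
Qed.

Lemma Cmod_minus_diag (x : C) : Cmod (x - x)%C = 0.
Proof. replace (x - x)%C with (RtoC 0) by ring. apply Cmod_0. Qed.

Lemma Cmod_minus_eq0 (x y : C) : Cmod (x - y)%C = 0 -> x = y.
Proof.
  intros H. apply Cmod_eq_0 in H.
  replace x with ((x - y) + y)%C by ring. rewrite H. ring.
Qed.

Lemma Cminus_neq0 (x y : C) : x <> y -> (x - y)%C <> RtoC 0.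
Proof.
  intros Hxy E. apply Hxy. replace x with ((x - y) + y)%C by ring. rewrite E. ring.
Qed.

Lemma Cmod_minus_le (x y : C) : Cmod x <= Cmod y + Cmod (x - y)%C.
Proof.
  replace x with (y + (x - y))%C at 1 by ring. apply Cmod_triangle.
Qed.

Lemma Rabs_Cmod_minus (x y : C) : Rabs (Cmod x - Cmod y) <= Cmod (x - y)%C.
Proof.
  pose proof (Cmod_minus_le x y). pose proof (Cmod_minus_le y x).
  rewrite Cmod_minus_sym in H0. apply Rabs_le. lra.
Qed.

Lemma sqrt2_lt_2 : sqrt 2 < 2.
Proof. rewrite <- (sqrt_pow2 2) at 2 by lra. apply sqrt_lt_1_alt. lra. Qed.

Lemma Cmod_le_2Rmax (z : C) : Cmod z <= 2 * Rmax (Rabs (fst z)) (Rabs (snd z)).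
Proof.
  pose proof sqrt2_lt_2. pose proof (Cmod_2Rmax z).
  pose proof (Rle_trans _ _ _ (Rabs_pos (fst z)) (Rmax_l _ (Rabs (snd z)))).
  nra.
Qed.

Lemma Cmult_continuous (X Y : C) eps : 0 < eps -> exists d, 0 < d /\
  forall x y, Cmod (x - X)%C < d -> Cmod (y - Y)%C < d ->
    Cmod (x * y - X * Y)%C < eps.
Proof.
  intros Heps. pose proof (Cmod_ge_0 X). pose proof (Cmod_ge_0 Y).
  set (d := Rmin 1 (eps / (Cmod X + Cmod Y + 1))).
  assert (Hd1 : d <= 1) by apply Rmin_l.
  assert (Hd : d * (Cmod X + Cmod Y + 1) <= eps).
  { apply Rle_trans with (eps / (Cmod X + Cmod Y + 1) * (Cmod X + Cmod Y + 1)).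
    - apply Rmult_le_compat_r; [lra | apply Rmin_r].
    - right. field. lra. }
  exists d. split; [apply Rmin_glb_lt; [lra | apply Rdiv_lt_0_compat; lra]|].
  intros x y Hx Hy.
  replace (x * y - X * Y)%C with ((x - X) * y + X * (y - Y))%C by ring.
  eapply Rle_lt_trans; [apply Cmod_triangle|]. rewrite !Cmod_mult.
  pose proof (Cmod_minus_le y Y). pose proof (Cmod_ge_0 (x - X)%C).
  pose proof (Cmod_ge_0 (y - Y)%C).
  nra.
Qed.

(* Limits are measured with [Cmod] rather than with Coquelicot's product
   balls on [C]; [filterlim_within_iff] relates the two. *)
Definition lim_within (D : C -> Prop) (f : C -> C) (t l : C) : Prop :=
  forall eps, 0 < eps -> exists d, 0 < d /\
    forall y, D y -> Cmod (y - t)%C < d -> Cmod (f y - l)%C < eps.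

Definition diff_quot (f : C -> C) (t y : C) : C := ((f y - f t) / (y - t))%C.

Definition cvg_C (u : nat -> C) (l : C) : Prop :=
  forall eps, 0 < eps -> exists N, forall n, (N <= n)%nat -> Cmod (u n - l)%C < eps.

Lemma filterlim_within_iff (D : C -> Prop) (f : C -> C) (t l : C) :
  filterlim f (within D (locally t)) (locally l) <-> lim_within D f t l.
Proof.
  assert (Hball : forall (x y : C) (e : posreal), ball x e y -> Cmod (y - x)%C < 2 * e).
  { intros x y e B. apply C_NormedModule_mixin_compat2 in B.
    pose proof sqrt2_lt_2.
    destruct e as [e He]; simpl in *. change (Cmod (y - x)%C < sqrt 2 * e) in B. nra. }
  split.
  - intros H eps Heps.
    assert (He2 : 0 < eps / 2) by lra.
    destruct (H _ (locally_ball l (mkposreal _ He2))) as [d Hd].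
    exists (d / 2). split; [destruct d; simpl; lra|].
    intros y Dy Hy.
    assert (B : ball t d y).
    { apply (ball_le t (d / 2)); [destruct d; simpl; lra|].
      apply C_NormedModule_mixin_compat1. exact Hy. }
    specialize (Hball _ _ _ (Hd y B Dy)). simpl in Hball. lra.
  - intros H P [eps HP].
    destruct (H eps (cond_pos eps)) as [d [Hd Hy]].
    assert (Hd2 : 0 < d / 2) by lra.
    exists (mkposreal _ Hd2). intros y By Dy. apply HP.
    apply C_NormedModule_mixin_compat1. apply Hy; auto.
    specialize (Hball _ _ _ By). simpl in Hball. lra.
Qed.

Lemma lim_within_ext (D : C -> Prop) (f g : C -> C) (t l : C) :
  (forall y, D y -> f y = g y) -> lim_within D f t l -> lim_within D g t l.
Proof.
  intros Hfg H eps Heps. destruct (H eps Heps) as [d [Hd Hf]].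
  exists d. split; auto. intros y Dy Hy. rewrite <- Hfg; auto.
Qed.

Lemma lim_within_comp (D E : C -> Prop) (f g : C -> C) (t s l : C) :
  (forall y, D y -> E (g y)) -> lim_within D g t s -> lim_within E f s l ->
  lim_within D (fun y => f (g y)) t l.
Proof.
  intros HDE Hg Hf eps Heps. destruct (Hf eps Heps) as [d1 [Hd1 Hf1]].
  destruct (Hg d1 Hd1) as [d2 [Hd2 Hg2]]. exists d2. split; auto.
Qed.

Lemma lim_within_mult (D : C -> Prop) (f g : C -> C) (t l1 l2 : C) :
  lim_within D f t l1 -> lim_within D g t l2 ->
  lim_within D (fun y => f y * g y)%C t (l1 * l2)%C.
Proof.
  intros Hf Hg eps Heps. destruct (Cmult_continuous l1 l2 eps Heps) as [e [He Hm]].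
  destruct (Hf e He) as [d1 [Hd1 Hf1]]. destruct (Hg e He) as [d2 [Hd2 Hg2]].
  exists (Rmin d1 d2). split; [apply Rmin_glb_lt; auto|].
  intros y Dy Hy. apply Hm.
  - apply Hf1; auto. eapply Rlt_le_trans; [exact Hy | apply Rmin_l].
  - apply Hg2; auto. eapply Rlt_le_trans; [exact Hy | apply Rmin_r].
Qed.

Lemma lim_within_unique (D : C -> Prop) (f : C -> C) (t l l' : C) :
  (forall e, 0 < e -> exists y, D y /\ Cmod (y - t)%C < e) ->
  lim_within D f t l -> lim_within D f t l' -> l = l'.
Proof.
  intros Hacc H H'. apply Cmod_minus_eq0.
  destruct (Cmod_ge_0 (l - l')%C) as [Hpos | ]; auto. exfalso.
  assert (Hpos2 : 0 < Cmod (l - l')%C / 2) by lra.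
  destruct (H _ Hpos2) as [d [Hd Hl]]. destruct (H' _ Hpos2) as [d' [Hd' Hl']].
  destruct (Hacc (Rmin d d')) as [y [Dy Hy]]; [apply Rmin_glb_lt; auto|].
  specialize (Hl y Dy (Rlt_le_trans _ _ _ Hy (Rmin_l _ _))).
  specialize (Hl' y Dy (Rlt_le_trans _ _ _ Hy (Rmin_r _ _))).
  pose proof (Cmod_minus_triangle l (f y) l'). rewrite Cmod_minus_sym in Hl. lra.
Qed.

Definition punctured (D : C -> Prop) (t : C) : C -> Prop := fun y => D y /\ y <> t.

Lemma curve_deriv_iff (G : C -> Prop) (f : C -> C) (t d : C) :
  curve_deriv G f t d <-> lim_within (punctured G t) (diff_quot f t) t d.
Proof. apply filterlim_within_iff. Qed.

Lemma diff_quot_lim_continuous (D : C -> Prop) (f : C -> C) (t d : C) :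
  lim_within (punctured D t) (diff_quot f t) t d -> lim_within D f t (f t).
Proof.
  intros H.
  assert (Hid : lim_within (punctured D t) (fun y => (y - t)%C) t (RtoC 0)).
  { intros eps Heps. exists eps. split; auto. intros y _ Hy.
    replace (y - t - 0)%C with (y - t)%C by ring. exact Hy. }
  assert (Hprod := lim_within_mult _ _ _ _ _ _ H Hid).
  intros eps Heps. destruct (Hprod eps Heps) as [d' [Hd' Hp]].
  exists d'. split; auto. intros y Dy Hy.
  destruct (classic (y = t)) as [-> | Hyt]; [rewrite Cmod_minus_diag; auto|].
  specialize (Hp y (conj Dy Hyt) Hy).
  replace (f y - f t)%C with (diff_quot f t y * (y - t) - d * 0)%C; auto.
  unfold diff_quot. field. apply Cminus_neq0; auto.
Qed.

Lemma diff_quot_lim_comp (D E : C -> Prop) (f g : C -> C) (t d1 d2 : C) :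
  (forall y, D y -> E (g y)) -> (forall y, D y -> y <> t -> g y <> g t) ->
  lim_within (punctured D t) (diff_quot g t) t d1 ->
  lim_within (punctured E (g t)) (diff_quot f (g t)) (g t) d2 ->
  lim_within (punctured D t) (diff_quot (fun y => f (g y)) t) t (d2 * d1)%C.
Proof.
  intros HDE Hinj Hg Hf.
  assert (Hgc : lim_within (punctured D t) g t (g t)).
  { intros eps Heps. destruct (diff_quot_lim_continuous _ _ _ _ Hg eps Heps) as [d [Hd Hc]].
    exists d. split; auto. intros y [Dy _]. auto. }
  apply lim_within_ext with (fun y => diff_quot f (g t) (g y) * diff_quot g t y)%C.
  - intros y [Dy Hyt]. unfold diff_quot. field.
    split; apply Cminus_neq0; auto.
  - apply lim_within_mult; auto.
    apply (lim_within_comp _ (punctured E (g t)) _ _ _ (g t)); auto.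
    intros y [Dy Hyt]. split; auto.
Qed.

Lemma cvg_C_comp (D : C -> Prop) (f : C -> C) (u : nat -> C) (t l : C) :
  (forall n, D (u n)) -> cvg_C u t -> lim_within D f t l ->
  cvg_C (fun n => f (u n)) l.
Proof.
  intros Du Hu Hf eps Heps. destruct (Hf eps Heps) as [d [Hd Hf']].
  destruct (Hu d Hd) as [N HN]. exists N. auto.
Qed.

Lemma cvg_C_Cmod (u : nat -> C) (l : C) :
  cvg_C u l -> is_lim_seq (fun n => Cmod (u n)) (Cmod l).
Proof.
  intros H. apply is_lim_seq_spec. intros eps.
  destruct (H eps (cond_pos eps)) as [N HN]. exists N. intros n Hn.
  eapply Rle_lt_trans; [apply Rabs_Cmod_minus | auto].
Qed.

Lemma cvg_C_unique (u : nat -> C) (l l' : C) : cvg_C u l -> cvg_C u l' -> l = l'.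
Proof.
  intros H H'. apply Cmod_minus_eq0.
  destruct (Cmod_ge_0 (l - l')%C) as [Hpos | ]; auto. exfalso.
  assert (Hpos2 : 0 < Cmod (l - l')%C / 2) by lra.
  destruct (H _ Hpos2) as [N HN]. destruct (H' _ Hpos2) as [N' HN'].
  specialize (HN (max N N') ltac:(lia)). specialize (HN' (max N N') ltac:(lia)).
  pose proof (Cmod_minus_triangle l (u (max N N')) l'). rewrite Cmod_minus_sym in HN. lra.
Qed.

Lemma cvg_C_succ (u : nat -> C) (l : C) : cvg_C u l -> cvg_C (fun n => u (S n)) l.
Proof.
  intros H eps Heps. destruct (H eps Heps) as [N HN]. exists N. intros n Hn. apply HN. lia.
Qed.

(** * The curve and its arc coordinate *)

Lemma continuity_pt_eps (f : R -> R) (x : R) : continuity_pt f x ->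
  forall eps, 0 < eps -> exists d, 0 < d /\
    forall y, Rabs (y - x) < d -> Rabs (f y - f x) < eps.
Proof.
  intros H eps Heps. destruct (H eps Heps) as [d [Hd Hf]]. exists d. split; auto.
  intros y Hy. destruct (Req_dec y x) as [-> | Hyx].
  - rewrite Rminus_diag, Rabs_R0. auto.
  - apply (Hf y). repeat split; auto.
Qed.

Lemma eps_continuity_pt (f : R -> R) (x : R) :
  (forall eps, 0 < eps -> exists d, 0 < d /\
     forall y, Rabs (y - x) < d -> Rabs (f y - f x) < eps) ->
  continuity_pt f x.
Proof.
  intros H eps Heps. destruct (H eps Heps) as [d [Hd Hf]]. exists d.
  split; auto. intros y [_ Hy]. apply Hf. exact Hy.
Qed.

Section Curve.
Variable gam : R -> C.
Hypothesis Hgam : jordan_smooth_param gam.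

Lemma curve_gam u : curve gam (gam u).
Proof. exists u. reflexivity. Qed.

Lemma gam_continuous s eps : 0 < eps -> exists d, 0 < d /\
  forall u, Rabs (u - s) < d -> Cmod (gam u - gam s)%C < eps.
Proof.
  intros Heps. destruct Hgam as [_ [Hder _]]. destruct (Hder s) as [Hx Hy].
  apply ex_derive_continuous, continuity_pt_filterlim in Hx, Hy.
  destruct (continuity_pt_eps _ _ Hx (eps / 2)) as [d1 [Hd1 H1]]; [lra|].
  destruct (continuity_pt_eps _ _ Hy (eps / 2)) as [d2 [Hd2 H2]]; [lra|].
  exists (Rmin d1 d2). split; [apply Rmin_glb_lt; auto|].
  intros u Hu. eapply Rle_lt_trans; [apply Cmod_le_2Rmax|].
  assert (Rmax (Rabs (fst (gam u - gam s)%C)) (Rabs (snd (gam u - gam s)%C)) < eps / 2);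
    [|lra].
  apply Rmax_lub_lt; simpl; [apply H1 | apply H2];
    eapply Rlt_le_trans; eauto; [apply Rmin_l | apply Rmin_r].
Qed.

Lemma gam_periodic (k : Z) s : gam (s + IZR k) = gam s.
Proof.
  destruct Hgam as [Hper _].
  revert s. induction k using Z.peano_ind; intros s.
  - rewrite Rplus_0_r. reflexivity.
  - rewrite succ_IZR, <- Rplus_assoc, Hper. apply IHk.
  - rewrite <- (IHk s), <- Hper. f_equal. unfold Z.pred. rewrite plus_IZR. simpl. ring.
Qed.

Lemma gam_eq_shift s s' : gam s = gam s' -> exists k, s' = s + IZR k.
Proof.
  intros H. destruct Hgam as [_ [_ [_ [_ Hinj]]]].
  assert (Hfrac : forall x, gam x = gam (x - IZR (Int_part x)) /\
                            0 <= x - IZR (Int_part x) < 1).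
  { intros x. split; [|destruct (base_Int_part x); lra].
    rewrite <- (gam_periodic (Int_part x) (x - _)). f_equal. ring. }
  destruct (Hfrac s) as [Es Hs]. destruct (Hfrac s') as [Es' Hs'].
  assert (s - IZR (Int_part s) = s' - IZR (Int_part s')) by (apply Hinj; congruence).
  exists (Int_part s' - Int_part s)%Z. rewrite minus_IZR. lra.
Qed.

Lemma gam_eq_close s s' : gam s = gam s' -> Rabs (s - s') < 1 -> s = s'.
Proof.
  intros H Hss'. destruct (gam_eq_shift _ _ H) as [k ->].
  apply Rabs_def2 in Hss'.
  assert (-1 < k < 1)%Z by (split; apply lt_IZR; simpl; lra).
  replace k with 0%Z by lia. simpl. ring.
Qed.

Lemma curve_not_isolated t : curve gam t ->
  forall e, 0 < e -> exists y, punctured (curve gam) t y /\ Cmod (y - t)%C < e.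
Proof.
  intros [s <-] e He. destruct (gam_continuous s e He) as [d [Hd H]].
  set (h := Rmin (d / 2) (1 / 2)).
  assert (0 < h) by (apply Rmin_glb_lt; lra).
  assert (h <= d / 2) by apply Rmin_l. assert (h <= 1 / 2) by apply Rmin_r.
  exists (gam (s + h)). repeat split.
  - exists (s + h). reflexivity.
  - intros E. apply gam_eq_close in E; [lra|]. rewrite Rabs_right; lra.
  - apply H. rewrite Rabs_right; lra.
Qed.

Definition coord (sp : R) (x : C) : R :=
  epsilon (inhabits 0) (fun c => 0 <= c < 1 /\ gam (sp + c) = x).

Lemma coord_spec sp x : curve gam x -> 0 <= coord sp x < 1 /\ gam (sp + coord sp x) = x.
Proof.
  intros [s Hs]. unfold coord. apply epsilon_spec.
  exists ((s - sp) - IZR (Int_part (s - sp))).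
  split; [destruct (base_Int_part (s - sp)); lra|].
  rewrite <- Hs, <- (gam_periodic (Int_part (s - sp))). f_equal. ring.
Qed.

Lemma coord_unique sp x c : 0 <= c < 1 -> gam (sp + c) = x -> coord sp x = c.
Proof.
  intros Hc Hx. assert (Hcx : curve gam x) by (exists (sp + c); auto).
  destruct (coord_spec sp x Hcx) as [H1 H2].
  assert (sp + coord sp x = sp + c)
    by (apply gam_eq_close; [congruence | apply Rabs_def1; lra]).
  lra.
Qed.

Lemma coord_pos sp x : curve gam x -> x <> gam sp -> 0 < coord sp x.
Proof.
  intros Hx Hne. destruct (coord_spec sp x Hx) as [[[H1 | H1] _] H2]; auto.
  exfalso. apply Hne. rewrite <- H2, <- H1, Rplus_0_r. reflexivity.
Qed.

Lemma coord_inj sp x y : curve gam x -> curve gam y -> coord sp x = coord sp y -> x = y.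
Proof.
  intros Hx Hy E. destruct (coord_spec sp x Hx) as [_ <-].
  destruct (coord_spec sp y Hy) as [_ <-]. rewrite E. reflexivity.
Qed.

Lemma pos_ordered_coord sp x y : curve gam x -> curve gam y -> x <> gam sp -> y <> gam sp ->
  (pos_ordered gam (gam sp) x y <-> coord sp x < coord sp y).
Proof.
  intros Hx Hy Nx Ny.
  destruct (coord_spec sp x Hx) as [[X1 X2] X3].
  destruct (coord_spec sp y Hy) as [[Y1 Y2] Y3].
  pose proof (coord_pos sp x Hx Nx). pose proof (coord_pos sp y Hy Ny).
  split.
  - intros [s1 [s2 [s3 [[L1 L2] [L3 [E1 [E2 E3]]]]]]].
    destruct (gam_eq_shift _ _ (eq_sym E1)) as [k1 K1].
    rewrite <- X3 in E2. destruct (gam_eq_shift _ _ (eq_sym E2)) as [k2 K2].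
    rewrite <- Y3 in E3. destruct (gam_eq_shift _ _ (eq_sym E3)) as [k3 K3].
    assert (-1 < k2 - k1 < 1 /\ -1 < k3 - k1 < 1)%Z
      by (repeat split; apply lt_IZR; rewrite minus_IZR; simpl; lra).
    replace k2 with k1 in K2 by lia. replace k3 with k1 in K3 by lia. lra.
  - intros Hlt. exists sp, (sp + coord sp x), (sp + coord sp y).
    repeat split; auto; lra.
Qed.

Lemma coord0_gam u : 0 <= u < 1 -> coord 0 (gam u) = u.
Proof. intros Hu. apply coord_unique; auto. rewrite Rplus_0_l. reflexivity. Qed.

Lemma gam_coord0 y : curve gam y -> gam (coord 0 y) = y.
Proof.
  intros Gy. rewrite <- (Rplus_0_l (coord 0 y)). apply (coord_spec), Gy.
Qed.

Lemma curve_arc_dist_pos z a b : (forall u, a <= u <= b -> gam u <> z) ->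
  exists M, 0 < M /\ forall u, a <= u <= b -> M <= Cmod (gam u - z)%C.
Proof.
  intros Hz. destruct (Rle_lt_dec a b) as [Hab | Hba].
  2:{ exists 1. split; [lra|]. intros; lra. }
  set (dist u := Cmod (gam u - z)%C).
  assert (Hcont : forall c, a <= c <= b -> continuity_pt dist c).
  { intros c _. apply eps_continuity_pt. intros eps Heps.
    destruct (gam_continuous c eps Heps) as [d [Hd Hc]].
    exists d. split; auto. intros y Hy.
    eapply Rle_lt_trans; [|apply Hc; eauto]. unfold dist.
    replace (gam y - gam c)%C with ((gam y - z) - (gam c - z))%C by ring.
    apply Rabs_Cmod_minus. }
  destruct (continuity_ab_min dist a b Hab Hcont) as [umin [Hmin Humin]].
  exists (dist umin). split; [|auto].
  destruct (Cmod_ge_0 (gam umin - z)%C) as [Hpos | H0]; auto.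
  exfalso. apply (Hz umin Humin), Cmod_minus_eq0. auto.
Qed.

Lemma coord0_continuous z : curve gam z -> z <> gam 0 ->
  forall eps, 0 < eps -> exists d, 0 < d /\ forall y, curve gam y ->
    Cmod (y - z)%C < d -> Rabs (coord 0 y - coord 0 z) < eps.
Proof.
  intros Gz Nz eps Heps.
  set (cz := coord 0 z).
  assert (Hcz : 0 <= cz < 1) by apply (coord_spec 0 z Gz).
  assert (Hfar : forall u, 0 <= u <= 1 -> eps <= Rabs (u - cz) -> gam u <> z).
  { intros u Hu Hd E. destruct (Req_dec u 1) as [-> | N1].
    - apply Nz. rewrite <- E, <- (Rplus_0_l 1). apply Hgam.
    - assert (cz = u) as -> by (unfold cz; rewrite <- E; apply coord0_gam; lra).
      rewrite Rminus_diag, Rabs_R0 in Hd. lra. }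
  destruct (curve_arc_dist_pos z 0 (cz - eps)) as [M1 [HM1 P1]].
  { intros u Hu. apply Hfar; [lra|]. rewrite Rabs_left; lra. }
  destruct (curve_arc_dist_pos z (cz + eps) 1) as [M2 [HM2 P2]].
  { intros u Hu. apply Hfar; [lra|]. rewrite Rabs_right; lra. }
  exists (Rmin M1 M2). split; [apply Rmin_glb_lt; auto|].
  intros y Gy Hy. fold cz.
  pose proof (Rmin_l M1 M2). pose proof (Rmin_r M1 M2).
  destruct (coord_spec 0 y Gy) as [Hcy _].
  rewrite <- (gam_coord0 y Gy) in Hy.
  destruct (Rle_lt_dec (coord 0 y) (cz - eps)) as [L1 | L1];
    [specialize (P1 (coord 0 y) ltac:(lra)); lra|].
  destruct (Rle_lt_dec (cz + eps) (coord 0 y)) as [L2 | L2];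
    [specialize (P2 (coord 0 y) ltac:(lra)); lra|].
  apply Rabs_def1; lra.
Qed.

Lemma coord0_near_base d0 : 0 < d0 < 1 / 2 -> exists e, 0 < e /\
  forall y, curve gam y -> Cmod (y - gam 0)%C < e ->
    coord 0 y < d0 \/ 1 - d0 < coord 0 y.
Proof.
  intros Hd0. destruct (curve_arc_dist_pos (gam 0) d0 (1 - d0)) as [M [HM P]].
  { intros u Hu E. apply gam_eq_close in E; [lra|]. rewrite Rminus_0_r, Rabs_right; lra. }
  exists M. split; auto. intros y Gy Hy.
  destruct (Rlt_le_dec (coord 0 y) d0) as [L | L]; auto.
  destruct (Rle_lt_dec (coord 0 y) (1 - d0)) as [L2 | L2]; auto.
  specialize (P (coord 0 y) (conj L L2)). rewrite gam_coord0 in P; auto. lra.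
Qed.

End Curve.

(** * Orbits of coordinate-increasing maps *)

Section Orbits.
Variable gam : R -> C.
Hypothesis Hgam : jordan_smooth_param gam.
Variable sp : R.

Definition coord_increasing (h : C -> C) : Prop :=
  forall x y, curve gam x -> curve gam y -> x <> gam sp -> y <> gam sp ->
    coord gam sp x < coord gam sp y -> coord gam sp (h x) < coord gam sp (h y).

Lemma preserves_orientation_coord_increasing (h : C -> C) :
  preserves_orientation gam h -> h (gam sp) = gam sp ->
  (forall x, curve gam x -> curve gam (h x)) ->
  (forall x, curve gam x -> x <> gam sp -> h x <> gam sp) -> coord_increasing h.
Proof.
  intros Hpres Hp HG Hav x y Gx Gy Nx Ny Hlt.
  apply (pos_ordered_coord gam Hgam); try apply HG; auto.
  rewrite <- Hp at 1. apply Hpres. apply (pos_ordered_coord gam Hgam); auto.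
Qed.

Lemma coord_increasing_inverse (h hi : C -> C) :
  (forall x, curve gam x -> curve gam (hi x)) -> (forall x, curve gam x -> h (hi x) = x) ->
  (forall x, curve gam x -> x <> gam sp -> hi x <> gam sp) ->
  coord_increasing h -> coord_increasing hi.
Proof.
  intros HGi Hhi Hav Hinc x y Gx Gy Nx Ny Hlt.
  destruct (Rtotal_order (coord gam sp (hi x)) (coord gam sp (hi y))) as [H | [H | H]];
    [exact H | exfalso..].
  - apply (coord_inj gam Hgam) in H; try apply HGi; auto.
    assert (x = y) by (rewrite <- (Hhi x), <- (Hhi y), H; auto). subst. lra.
  - apply Hinc in H; try apply HGi; auto. rewrite !Hhi in H; auto. lra.
Qed.

Lemma coord_increasing_orbit_cvg (h : C -> C) :
  (forall x, curve gam x -> curve gam (h x)) ->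
  (forall x, curve gam x -> x <> gam sp -> h x <> gam sp) ->
  h (gam sp) = gam sp ->
  coord_increasing h ->
  forall t, curve gam t -> exists Y, curve gam Y /\ cvg_C (fun n => Nat.iter n h t) Y.
Proof.
  intros HG Hav Hp Hinc t Gt.
  destruct (classic (t = gam sp)) as [-> | Ntp].
  { exists (gam sp). split; [exists sp; reflexivity|].
    intros eps Heps. exists O. intros n _.
    replace (Nat.iter n h (gam sp)) with (gam sp) by (induction n; simpl; congruence).
    rewrite Cmod_minus_diag. auto. }
  set (x n := Nat.iter n h t).
  assert (Gx : forall n, curve gam (x n)) by (intros n; apply Nat.iter_invariant; auto).
  assert (Nx : forall n, x n <> gam sp) by (induction n; simpl; auto).
  set (u n := coord gam sp (x n)).
  assert (Hu : forall n, 0 <= u n < 1 /\ gam (sp + u n) = x n)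
    by (intros n; apply (coord_spec gam Hgam), Gx).
  assert (Hmono : forall n, u n < u (S n) -> u (S n) < u (S (S n)))
    by (intros n; apply Hinc; auto).
  assert (Hmono' : forall n, u (S n) < u n -> u (S (S n)) < u (S n))
    by (intros n; apply Hinc; auto).
  assert (HL : exists L : R, is_lim_seq u L).
  { destruct (Rtotal_order (u 0%nat) (u 1%nat)) as [H01 | [H01 | H01]].
    - assert (Hup : forall n, u n < u (S n)) by (induction n; auto).
      destruct (ex_finite_lim_seq_incr u 1) as [L HL]; eauto.
      + intros n. left. apply Hup.
      + intros n. left. apply Hu.
    - apply (coord_inj gam Hgam) in H01; auto.
      exists (u 0%nat).
      apply is_lim_seq_ext with (fun _ => u 0%nat); [|apply is_lim_seq_const].
      intros n. unfold u, x in *. simpl in H01.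
      induction n; auto. rewrite Nat.iter_succ_r, <- H01. auto.
    - assert (Hdown : forall n, u (S n) < u n) by (induction n; [exact H01 | auto]).
      destruct (ex_finite_lim_seq_decr u 0) as [L HL]; eauto.
      + intros n. left. apply Hdown.
      + intros n. apply Hu. }
  destruct HL as [L HL]. exists (gam (sp + L)). split; [exists (sp + L); auto|].
  intros eps Heps. destruct (gam_continuous gam Hgam (sp + L) eps Heps) as [d [Hd Hc]].
  apply is_lim_seq_spec in HL. destruct (HL (mkposreal d Hd)) as [N HN].
  exists N. intros n Hn. fold (x n). rewrite <- (proj2 (Hu n)). apply Hc.
  replace (sp + u n - (sp + L)) with (u n - L) by ring. apply HN; auto.
Qed.

End Orbits.

(** * Fixed point of an orientation-reversing map *)

Section Reversing.
Variable gam : R -> C.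
Hypothesis Hgam : jordan_smooth_param gam.
Variables alpha alpha_inv : C -> C.
Hypothesis HG : forall t, curve gam t -> curve gam (alpha t).
Hypothesis HGi : forall t, curve gam t -> curve gam (alpha_inv t).
Hypothesis Hinv1 : forall t, curve gam t -> alpha_inv (alpha t) = t.
Hypothesis Hinv2 : forall t, curve gam t -> alpha (alpha_inv t) = t.
Hypothesis Hcont : forall t, curve gam t -> lim_within (curve gam) alpha t (alpha t).
Hypothesis Hrev : changes_orientation gam alpha.

Local Hint Resolve curve_gam : core.

Lemma preimage_base_coord : alpha (gam 0) <> gam 0 ->
  0 < coord gam 0 (alpha_inv (gam 0)) < 1.
Proof.
  intros Hmove. split.
  - apply (coord_pos gam Hgam); auto. intros E. apply Hmove.
    rewrite <- E at 1. auto.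
  - apply (coord_spec gam Hgam 0 _ (HGi _ (curve_gam gam 0))).
Qed.

Lemma alpha_gam_ne_base u : 0 <= u < coord gam 0 (alpha_inv (gam 0)) ->
  alpha (gam u) <> gam 0.
Proof.
  intros Hu E.
  assert (Hw : gam u = alpha_inv (gam 0)) by (rewrite <- E, Hinv1; auto).
  destruct (coord_spec gam Hgam 0 (alpha_inv (gam 0))) as [Hcw _]; auto.
  assert (coord gam 0 (gam u) = u) by (apply coord0_gam; auto; lra).
  rewrite Hw in H. lra.
Qed.

Lemma reversing_coord_decreasing u v : alpha (gam 0) <> gam 0 ->
  0 <= u < v -> v < coord gam 0 (alpha_inv (gam 0)) ->
  coord gam 0 (alpha (gam v)) < coord gam 0 (alpha (gam u)).
Proof.
  intros Hmove Huv Hv.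
  set (cw := coord gam 0 (alpha_inv (gam 0))) in *.
  assert (Hw : gam cw = alpha_inv (gam 0)) by (apply (gam_coord0 gam Hgam); auto).
  pose proof (preimage_base_coord Hmove) as Hcw. fold cw in Hcw.
  assert (Hord : pos_ordered gam (gam u) (gam v) (alpha_inv (gam 0))).
  { exists u, v, cw. repeat split; auto; lra. }
  apply Hrev in Hord. rewrite Hinv2 in Hord; auto.
  apply (pos_ordered_coord gam Hgam 0); auto; apply alpha_gam_ne_base; fold cw; lra.
Qed.

Lemma reversing_coord_continuous u : 0 <= u < coord gam 0 (alpha_inv (gam 0)) ->
  continuity_pt (fun u => coord gam 0 (alpha (gam u))) u.
Proof.
  intros Hu. apply eps_continuity_pt. intros eps Heps.
  destruct (coord0_continuous gam Hgam (alpha (gam u))) with eps as [d1 [Hd1 H1]]; auto.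
  { apply alpha_gam_ne_base; auto. }
  destruct (Hcont (gam u) (curve_gam gam u) d1 Hd1) as [d2 [Hd2 H2]].
  destruct (gam_continuous gam Hgam u d2 Hd2) as [d3 [Hd3 H3]].
  exists d3. split; auto.
Qed.

Lemma reversing_coord_below_diagonal : alpha (gam 0) <> gam 0 ->
  exists ub, 0 < ub < coord gam 0 (alpha_inv (gam 0)) /\
             coord gam 0 (alpha (gam ub)) < ub.
Proof.
  intros Hmove.
  set (f u := coord gam 0 (alpha (gam u))).
  set (cw := coord gam 0 (alpha_inv (gam 0))).
  pose proof (preimage_base_coord Hmove) as Hcw. fold cw in Hcw.
  assert (Hf0 : 0 < f 0 < 1).
  { split; [apply (coord_pos gam Hgam); auto|].
    apply (coord_spec gam Hgam 0 _ (HG _ (curve_gam gam 0))). }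
  (* [f] decreases from [f 0 < 1] and [alpha (gam u)] tends to [gam 0] as [u]
     tends to [cw], so [f u] becomes small *)
  set (d0 := Rmin (cw / 2) ((1 - f 0) / 2)).
  assert (Hd0 : d0 <= cw / 2 /\ d0 <= (1 - f 0) / 2) by (split; [apply Rmin_l | apply Rmin_r]).
  destruct (coord0_near_base gam Hgam d0) as [e [He Hnear]].
  { split; [apply Rmin_glb_lt|]; lra. }
  destruct (Hcont (alpha_inv (gam 0))) with e as [d1 [Hd1 H1]]; auto.
  rewrite Hinv2 in H1; auto.
  destruct (gam_continuous gam Hgam cw d1 Hd1) as [d2 [Hd2 H2]].
  assert (Hw : gam cw = alpha_inv (gam 0)) by (apply (gam_coord0 gam Hgam); auto).
  rewrite Hw in H2.
  set (ub := cw - Rmin (cw / 4) (d2 / 2)).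
  assert (Hub : 3 * cw / 4 <= ub < cw /\ Rabs (ub - cw) < d2).
  { pose proof (Rmin_l (cw / 4) (d2 / 2)). pose proof (Rmin_r (cw / 4) (d2 / 2)).
    assert (0 < Rmin (cw / 4) (d2 / 2)) by (apply Rmin_glb_lt; lra).
    unfold ub. rewrite Rabs_left; lra. }
  exists ub. split; [lra|].
  assert (f ub < f 0) by (apply reversing_coord_decreasing; auto; fold cw; lra).
  destruct (Hnear (alpha (gam ub))); auto.
  - apply H1; auto. apply H2. apply Hub.
  - unfold f in *; lra.
  - unfold f in *; lra.
Qed.

Lemma reversing_fixed_point : exists q, curve gam q /\ alpha q = q.
Proof.
  destruct (classic (alpha (gam 0) = gam 0)) as [Hfix | Hmove];
    [exists (gam 0); auto|].
  destruct (reversing_coord_below_diagonal Hmove) as [ub [Hub Hfub]].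
  assert (Hf0 : 0 < coord gam 0 (alpha (gam 0))) by (apply (coord_pos gam Hgam); auto).
  destruct (IVT_interv (fun u => u - coord gam 0 (alpha (gam u))) 0 ub) as [z [Hz Hfz]];
    try lra.
  - intros u Hu. apply continuity_pt_minus; [apply derivable_continuous_pt, derivable_pt_id|].
    apply reversing_coord_continuous. lra.
  - exists (gam z). split; auto.
    rewrite <- (gam_coord0 gam Hgam (alpha (gam z))); auto. f_equal. lra.
Qed.

End Reversing.

(** * Products along orbits and derivatives of iterates *)

Lemma fm_factor_zero (f alpha : C -> C) n i t :
  (i < n)%nat -> f (Nat.iter i alpha t) = RtoC 0 -> fm f alpha n t = RtoC 0.
Proof.
  intros Hi Hf. induction n as [|n IH]; [lia|]. simpl.
  destruct (Nat.eq_dec i n) as [-> | Hin].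
  - rewrite Hf. ring.
  - rewrite IH by lia. ring.
Qed.

Lemma fm_shift (f alpha : C -> C) n t :
  (fm f alpha n (alpha t) * f t = fm f alpha n t * f (Nat.iter n alpha t))%C.
Proof.
  induction n as [|n IH]; simpl; [ring|].
  rewrite Nat.iter_swap.
  transitivity (fm f alpha n (alpha t) * f t * f (alpha (Nat.iter n alpha t)))%C; [ring|].
  rewrite IH. ring.
Qed.

Lemma fm_periodic (f alpha : C -> C) n t :
  Nat.iter n alpha t = t -> fm f alpha n (alpha t) = fm f alpha n t.
Proof.
  intros Hper. destruct (classic (f t = RtoC 0)) as [Hf | Hf].
  - destruct n as [|n]; [reflexivity|].
    rewrite (fm_factor_zero f alpha (S n) 0 t) by (auto; lia).
    (* the last factor of the product at [alpha t] is [f (alpha_n t) = f t] *)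
    apply (fm_factor_zero f alpha (S n) n); [lia|].
    rewrite Nat.iter_swap. change (f (Nat.iter (S n) alpha t) = RtoC 0). congruence.
  - pose proof (fm_shift f alpha n t) as Hs. rewrite Hper in Hs.
    transitivity (fm f alpha n (alpha t) * f t / f t)%C; [field; auto|].
    rewrite Hs. field. auto.
Qed.

Section Iterates.
Variable G : C -> Prop.
Variable alpha : C -> C.
Hypothesis HG : forall y, G y -> G (alpha y).

Lemma iter_continuous n t :
  (forall y, G y -> lim_within G alpha y (alpha y)) ->
  G t -> lim_within G (Nat.iter n alpha) t (Nat.iter n alpha t).
Proof.
  intros Hc Gt. induction n as [|n IH].
  - intros eps Heps. exists eps. split; auto.
  - apply (lim_within_comp _ G alpha (Nat.iter n alpha) _ (Nat.iter n alpha t)); auto.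
    + intros y Gy. apply Nat.iter_invariant; auto.
    + apply Hc, Nat.iter_invariant; auto.
Qed.

Lemma fm_continuous (f : C -> C) n t :
  (forall y, G y -> lim_within G alpha y (alpha y)) ->
  (forall y, G y -> lim_within G f y (f y)) ->
  G t -> lim_within G (fm f alpha n) t (fm f alpha n t).
Proof.
  intros Hc Hf Gt. induction n as [|n IH]; simpl.
  - intros eps Heps. exists 1. split; [lra|]. intros. rewrite Cmod_minus_diag. auto.
  - apply lim_within_mult; auto.
    apply (lim_within_comp _ G f (Nat.iter n alpha) _ (Nat.iter n alpha t)); auto.
    + intros y Gy. apply Nat.iter_invariant; auto.
    + apply iter_continuous; auto.
    + apply Hf, Nat.iter_invariant; auto.
Qed.

Lemma fm_neq0 (f : C -> C) n t :
  (forall y, G y -> f y <> RtoC 0) -> G t -> fm f alpha n t <> RtoC 0.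
Proof.
  intros Hf Gt. induction n as [|n IH]; simpl.
  - intros E. apply RtoC_inj in E. lra.
  - apply Cmult_neq_0; auto. apply Hf, Nat.iter_invariant; auto.
Qed.

Lemma iter_deriv (d : C -> C) n t :
  (forall x y, G x -> G y -> alpha x = alpha y -> x = y) ->
  (forall y, G y -> lim_within (punctured G y) (diff_quot alpha y) y (d y)) ->
  G t -> lim_within (punctured G t) (diff_quot (Nat.iter n alpha) t) t (fm d alpha n t).
Proof.
  intros Hinj Hd Gt. induction n as [|n IH]; simpl.
  - intros eps Heps. exists 1. split; [lra|]. intros y [_ Hyt] _.
    unfold diff_quot. simpl. replace ((y - t) / (y - t))%C with (RtoC 1);
      [rewrite Cmod_minus_diag; auto | field; apply Cminus_neq0; auto].
  - rewrite Cmult_comm.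
    apply (diff_quot_lim_comp G G alpha (Nat.iter n alpha)); auto.
    + intros y Gy. apply Nat.iter_invariant; auto.
    + intros y Gy Hyt E. apply Hyt. clear IH. induction n as [|n IHn]; auto.
      apply IHn. apply Hinj; auto; apply Nat.iter_invariant; auto.
    + apply Hd, Nat.iter_invariant; auto.
Qed.

End Iterates.

(** * Continuity of eta *)

Lemma is_lim_seq_Rmin (u v : nat -> R) (l1 l2 : R) :
  is_lim_seq u l1 -> is_lim_seq v l2 ->
  is_lim_seq (fun n => Rmin (u n) (v n)) (Rmin l1 l2).
Proof.
  intros Hu Hv.
  assert (Hmin : forall x y, Rmin x y = (x + y - Rabs (x - y)) / 2).
  { intros x y. unfold Rmin. destruct (Rle_dec x y);
      [rewrite Rabs_left1 | rewrite Rabs_right]; lra. }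
  rewrite Hmin. apply (is_lim_seq_ext (fun n => (u n + v n - Rabs (u n - v n)) / 2));
    [intros n; rewrite Hmin; auto|].
  apply (is_lim_seq_scal_r _ (/ 2) (l1 + l2 - Rabs (l1 - l2))).
  apply is_lim_seq_minus'; [apply is_lim_seq_plus'; auto|].
  apply (is_lim_seq_abs _ (l1 - l2)), is_lim_seq_minus'; auto.
Qed.

Lemma is_lim_seq_Rmax (u v : nat -> R) (l1 l2 : R) :
  is_lim_seq u l1 -> is_lim_seq v l2 ->
  is_lim_seq (fun n => Rmax (u n) (v n)) (Rmax l1 l2).
Proof.
  intros Hu Hv.
  assert (Hmax : forall x y, Rmax x y = x + y - Rmin x y).
  { intros x y. unfold Rmax, Rmin. destruct (Rle_dec x y); lra. }
  rewrite Hmax. apply (is_lim_seq_ext (fun n => u n + v n - Rmin (u n) (v n)));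
    [intros n; rewrite Hmax; auto|].
  apply is_lim_seq_minus'; [apply is_lim_seq_plus'; auto | apply is_lim_seq_Rmin; auto].
Qed.

Lemma is_lim_seq_Rpower (u : nat -> R) (l c : R) :
  0 < l -> is_lim_seq u l -> is_lim_seq (fun n => Rpower (u n) c) (Rpower l c).
Proof.
  intros Hl Hu. apply (is_lim_seq_continuous (fun x => Rpower x c)); auto.
  apply derivable_continuous_pt. exists (c * Rpower l (c - 1)).
  apply derivable_pt_lim_power. auto.
Qed.

Section Eta.
Variable G : C -> Prop.
Variables (alpha a b d1 dm : C -> C) (m : nat) (aX bX : R).
Hypothesis HG : forall y, G y -> G (alpha y).
Hypothesis Hc : forall y, G y -> lim_within G alpha y (alpha y).
Hypothesis Ha : forall y, G y -> lim_within G a y (a y).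
Hypothesis Hb : forall y, G y -> lim_within G b y (b y).
Hypothesis Hd1 : forall y, G y -> lim_within G d1 y (d1 y).
Hypothesis Hd1n : forall y, G y -> d1 y <> RtoC 0.
Hypothesis Hdm : forall y, G y -> dm y = fm d1 alpha m y.

Lemma eta_cvg i (y : nat -> C) (Y : C) :
  (forall k, G (y k)) -> G Y -> cvg_C y Y ->
  is_lim_seq (fun k => eta i a b alpha dm m aX bX (y k)) (eta i a b alpha dm m aX bX Y).
Proof.
  intros Gy GY Hy.
  assert (Hfm : forall f, (forall z, G z -> lim_within G f z (f z)) ->
            is_lim_seq (fun k => Cmod (fm f alpha m (y k))) (Cmod (fm f alpha m Y))).
  { intros f Hf. apply cvg_C_Cmod, (cvg_C_comp G _ _ Y); auto. apply fm_continuous; auto. }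
  assert (Hpow : forall c, is_lim_seq (fun k => Rpower (Cmod (dm (y k))) c)
                                      (Rpower (Cmod (dm Y)) c)).
  { intros c. rewrite Hdm by auto.
    apply (is_lim_seq_ext (fun k => Rpower (Cmod (fm d1 alpha m (y k))) c));
      [intros k; rewrite Hdm; auto|].
    apply is_lim_seq_Rpower; auto.
    apply Cmod_gt_0, (fm_neq0 G); auto. }
  destruct i; simpl; unfold eta0, eta1;
    apply is_lim_seq_minus'; auto; apply is_lim_seq_mult'; auto;
    [apply is_lim_seq_Rmin | apply is_lim_seq_Rmax]; auto.
Qed.

Lemma eta_periodic i (Y : C) :
  G Y -> Nat.iter m alpha Y = Y ->
  eta i a b alpha dm m aX bX (alpha Y) = eta i a b alpha dm m aX bX Y.
Proof.
  intros GY HY.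
  destruct i; simpl; unfold eta0, eta1; rewrite !Hdm, !fm_periodic; auto.
Qed.

End Eta.

(** * Invariance *)

Lemma iterz_of_nat (f g : C -> C) n x : iterz f g (Z.of_nat n) x = Nat.iter n f x.
Proof. destruct n; [reflexivity|]. simpl. rewrite SuccNat2Pos.id_succ. reflexivity. Qed.

Lemma iterz_opp_of_nat (f g : C -> C) n x : iterz f g (- Z.of_nat n) x = Nat.iter n g x.
Proof. destruct n; [reflexivity|]. simpl. rewrite SuccNat2Pos.id_succ. reflexivity. Qed.

Lemma iter_mul {A : Type} (f : A -> A) m n x :
  Nat.iter (m * n) f x = Nat.iter n (Nat.iter m f) x.
Proof.
  induction n as [|n IH]; simpl; [rewrite Nat.mul_0_r; reflexivity|].
  rewrite Nat.mul_succ_r, Nat.add_comm, Nat.iter_add, IH. reflexivity.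
Qed.

Section Invariance.
Variable G : C -> Prop.
Variables alpha alpha_inv : C -> C.
Hypothesis HG : forall t, G t -> G (alpha t).
Hypothesis HGi : forall t, G t -> G (alpha_inv t).
Hypothesis Hinv1 : forall t, G t -> alpha_inv (alpha t) = t.
Hypothesis Hinv2 : forall t, G t -> alpha (alpha_inv t) = t.

Lemma iter_inv_iter n x : G x -> Nat.iter n alpha_inv (Nat.iter n alpha x) = x.
Proof.
  revert x. induction n as [|n IH]; intros x Gx; simpl; auto.
  rewrite <- Nat.iter_swap, Hinv1; auto. apply Nat.iter_invariant; auto.
Qed.

Lemma iter_iter_inv n x : G x -> Nat.iter n alpha (Nat.iter n alpha_inv x) = x.
Proof.
  revert x. induction n as [|n IH]; intros x Gx; simpl; auto.
  rewrite <- Nat.iter_swap, Hinv2; auto. apply Nat.iter_invariant; auto.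
Qed.

Lemma iter_inv_comm n y :
  G y -> Nat.iter n alpha_inv (alpha y) = alpha (Nat.iter n alpha_inv y).
Proof.
  intros Gy. induction n as [|n IH]; simpl; auto.
  rewrite IH, Hinv1, Hinv2; auto; apply Nat.iter_invariant; auto.
Qed.

Lemma iterz_invariant (P : C -> Prop) :
  (forall t, G t -> (P t <-> P (alpha t))) ->
  forall k t, G t -> (P t <-> P (iterz alpha alpha_inv k t)).
Proof.
  intros H k t Gt.
  assert (Hi : forall t, G t -> (P t <-> P (alpha_inv t))).
  { intros s Gs. rewrite (H (alpha_inv s)), Hinv2; auto. reflexivity. }
  destruct k as [|n|n]; simpl; [reflexivity| |];
    induction (Pos.to_nat n) as [|j IH]; simpl; try reflexivity; rewrite IH;
    [apply H | apply Hi]; apply Nat.iter_invariant; auto.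
Qed.

Lemma iterz_invariant_eq {X : Type} (F : C -> X) :
  (forall t, G t -> F (alpha t) = F t) ->
  forall k t, G t -> F (iterz alpha alpha_inv k t) = F t.
Proof.
  intros H k t Gt.
  apply (iterz_invariant (fun s => F s = F t)); auto.
  intros s Gs. rewrite H; auto. reflexivity.
Qed.

Lemma Phi_image (m : nat) (g : C -> C) t :
  (forall y, G y -> G (g y)) -> (forall x y, G x -> G y -> g x = g y -> x = y) ->
  (forall y, G y -> Nat.iter m alpha (g y) = g (Nat.iter m alpha y)) ->
  lim_within G g t (g t) -> Phi G alpha m t -> Phi G alpha m (g t).
Proof.
  intros Hg Hinj Hcomm Hc HPhi eps Heps.
  destruct (Hc eps Heps) as [d [Hd Hgd]].
  destruct (HPhi d Hd) as [tau [Gtau [Hmove Htau]]].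
  exists (g tau). repeat split; auto.
  rewrite Hcomm; auto. intros E. apply Hmove, Hinj; auto. apply Nat.iter_invariant; auto.
Qed.

End Invariance.

Section EtaInvariance.
Variable gam : R -> C.
Hypothesis Hgam : jordan_smooth_param gam.
Local Notation G := (curve gam).
Variables (alpha alpha_inv a b d1 dm : C -> C) (m : nat) (aX bX : R).
Hypothesis HG : forall t, G t -> G (alpha t).
Hypothesis HGi : forall t, G t -> G (alpha_inv t).
Hypothesis Hinv1 : forall t, G t -> alpha_inv (alpha t) = t.
Hypothesis Hinv2 : forall t, G t -> alpha (alpha_inv t) = t.
Hypothesis Hc : forall t, G t -> lim_within G alpha t (alpha t).
Hypothesis Hci : forall t, G t -> lim_within G alpha_inv t (alpha_inv t).
Hypothesis Ha : forall y, G y -> lim_within G a y (a y).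
Hypothesis Hb : forall y, G y -> lim_within G b y (b y).
Hypothesis Hd1 : forall y, G y -> lim_within G d1 y (d1 y).
Hypothesis Hd1n : forall y, G y -> d1 y <> RtoC 0.
Hypothesis Hdm : forall y, G y -> dm y = fm d1 alpha m y.
Variable sp : R.
Hypothesis Hfix : Nat.iter m alpha (gam sp) = gam sp.
Hypothesis Hpres : preserves_orientation gam (Nat.iter m alpha).

Local Notation h := (Nat.iter m alpha).
Local Notation hi := (Nat.iter m alpha_inv).

Lemma h_avoids_base x : G x -> x <> gam sp -> h x <> gam sp.
Proof.
  intros Gx Nx E. apply Nx.
  rewrite <- (iter_inv_iter G alpha alpha_inv HG Hinv1 m x Gx), E.
  rewrite <- Hfix at 1. apply (iter_inv_iter G); auto. apply curve_gam.
Qed.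

Lemma hi_avoids_base x : G x -> x <> gam sp -> hi x <> gam sp.
Proof.
  intros Gx Nx E. apply Nx.
  rewrite <- (iter_iter_inv G alpha alpha_inv HGi Hinv2 m x), E; auto.
Qed.

Lemma h_coord_increasing : coord_increasing gam sp h.
Proof.
  apply (preserves_orientation_coord_increasing gam Hgam sp); auto.
  - intros x Gx. apply Nat.iter_invariant; auto.
  - apply h_avoids_base.
Qed.

Lemma h_orbit_cvg t : G t -> exists Y, G Y /\ cvg_C (fun n => Nat.iter n h t) Y.
Proof.
  apply (coord_increasing_orbit_cvg gam Hgam sp); auto.
  - intros x Gx. apply Nat.iter_invariant; auto.
  - apply h_avoids_base.
  - apply h_coord_increasing.
Qed.

Lemma hi_orbit_cvg t : G t -> exists Y, G Y /\ cvg_C (fun n => Nat.iter n hi t) Y.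
Proof.
  assert (Hhi : forall x, G x -> G (hi x)) by (intros x Gx; apply Nat.iter_invariant; auto).
  apply (coord_increasing_orbit_cvg gam Hgam sp); auto.
  - apply hi_avoids_base.
  - rewrite <- Hfix at 1. apply (iter_inv_iter G); auto. apply curve_gam.
  - apply (coord_increasing_inverse gam Hgam sp h); auto.
    + intros x Gx. apply (iter_iter_inv G); auto.
    + apply hi_avoids_base.
    + apply h_coord_increasing.
Qed.

(* Along a convergent [g]-orbit, [eta] tends to its value at the limit [Y],
   which is [alpha_m]-periodic; [eta] takes the same value at [alpha Y]. *)
Lemma Lim_seq_eta_orbit_alpha (g : C -> C) i t :
  (forall y, G y -> G (g y)) -> (forall y, G y -> lim_within G g y (g y)) ->
  (forall y, G y -> g (alpha y) = alpha (g y)) ->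
  (forall Y, G Y -> g Y = Y -> h Y = Y) ->
  (exists Y, G Y /\ cvg_C (fun n => Nat.iter n g t) Y) -> G t ->
  Lim_seq (fun n => eta i a b alpha dm m aX bX (Nat.iter n g (alpha t))) =
  Lim_seq (fun n => eta i a b alpha dm m aX bX (Nat.iter n g t)).
Proof.
  intros Hg Hgc Hcomm Hfixg [Y [GY HY]] Gt.
  assert (Gorb : forall n, G (Nat.iter n g t)) by (intros n; apply Nat.iter_invariant; auto).
  assert (HgY : g Y = Y).
  { apply (cvg_C_unique (fun n => Nat.iter (S n) g t)); [|apply cvg_C_succ; auto].
    apply (cvg_C_comp G g _ Y); auto. }
  assert (Hswap : forall n, Nat.iter n g (alpha t) = alpha (Nat.iter n g t)).
  { induction n as [|n IH]; simpl; auto. rewrite IH, Hcomm; auto. }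
  rewrite (Lim_seq_ext _ (fun n => eta i a b alpha dm m aX bX (alpha (Nat.iter n g t))))
    by (intros n; rewrite Hswap; reflexivity).
  rewrite (is_lim_seq_unique _ _ (eta_cvg G alpha a b d1 dm m aX bX HG Hc Ha Hb Hd1 Hd1n Hdm
             i _ _ Gorb GY HY)).
  rewrite (is_lim_seq_unique _ (eta i a b alpha dm m aX bX (alpha Y))).
  - f_equal. apply (eta_periodic G alpha a b d1); auto.
  - apply (eta_cvg G alpha a b d1); auto. apply (cvg_C_comp G alpha _ Y); auto.
Qed.

Lemma eta_plus_alpha i t : G t ->
  eta_plus i a b alpha alpha_inv dm m aX bX (alpha t) =
  eta_plus i a b alpha alpha_inv dm m aX bX t.
Proof.
  intros Gt. unfold eta_plus.
  rewrite !(Lim_seq_ext (fun n => eta i a b alpha dm m aX bX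
             (iterz alpha alpha_inv (Z.of_nat (m * n)) _))
             (fun n => eta i a b alpha dm m aX bX (Nat.iter n h _)))
    by (intros n; rewrite iterz_of_nat, iter_mul; reflexivity).
  apply Lim_seq_eta_orbit_alpha; auto.
  - intros y Gy. apply Nat.iter_invariant; auto.
  - intros y Gy. apply (iter_continuous G); auto.
  - intros y Gy. apply Nat.iter_swap.
  - apply h_orbit_cvg; auto.
Qed.

Lemma eta_minus_alpha i t : G t ->
  eta_minus i a b alpha alpha_inv dm m aX bX (alpha t) =
  eta_minus i a b alpha alpha_inv dm m aX bX t.
Proof.
  intros Gt. unfold eta_minus.
  rewrite !(Lim_seq_ext (fun n => eta i a b alpha dm m aX bX
             (iterz alpha alpha_inv (- Z.of_nat (m * n)) _))
             (fun n => eta i a b alpha dm m aX bX (Nat.iter n hi _)))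
    by (intros n; rewrite iterz_opp_of_nat, iter_mul; reflexivity).
  apply Lim_seq_eta_orbit_alpha; auto.
  - intros y Gy. apply Nat.iter_invariant; auto.
  - intros y Gy. apply (iter_continuous G); auto.
  - intros y Gy. apply (iter_inv_comm G); auto.
  - intros Y GY E. rewrite <- E at 1. apply (iter_iter_inv G); auto.
  - apply hi_orbit_cvg; auto.
Qed.

Lemma Phi_alpha t : G t -> (Phi G alpha m (alpha t) <-> Phi G alpha m t).
Proof.
  intros Gt. split; intros HPhi.
  - rewrite <- (Hinv1 t Gt). apply (Phi_image G alpha HG); auto.
    + intros x y Gx Gy E. rewrite <- (Hinv2 x), <- (Hinv2 y), E; auto.
    + intros y Gy. apply (iter_inv_comm G alpha_inv alpha HG Hinv2 Hinv1); auto.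
  - apply (Phi_image G alpha HG); auto.
    + intros x y Gx Gy E. rewrite <- (Hinv1 x), <- (Hinv1 y), E; auto.
    + intros y Gy. apply Nat.iter_swap.
Qed.

Lemma Gam_alpha j t : G t ->
  (Gam j gam a b alpha alpha_inv dm m aX bX t <->
   Gam j gam a b alpha alpha_inv dm m aX bX (alpha t)).
Proof.
  intros Gt. pose proof (HG t Gt).
  destruct j as [|[|[|[|[|[|j]]]]]]; simpl;
    rewrite ?eta_plus_alpha, ?eta_minus_alpha, ?Phi_alpha; tauto.
Qed.

End EtaInvariance.

Lemma preserves_orientation_iter gam (alpha : C -> C) n :
  preserves_orientation gam alpha -> preserves_orientation gam (Nat.iter n alpha).
Proof.
  intros H. induction n as [|n IH]; intros z1 z2 z3 Hord; simpl; auto.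
Qed.

Lemma changes_orientation_twice gam (alpha : C -> C) :
  changes_orientation gam alpha -> preserves_orientation gam (Nat.iter 2 alpha).
Proof. intros H z1 z2 z3 Hord. simpl. apply H, H, Hord. Qed.

Lemma curve_deriv_continuous (G : C -> Prop) (f d : C -> C) :
  (forall t, G t -> curve_deriv G f t (d t)) ->
  forall t, G t -> lim_within G f t (f t).
Proof.
  intros Hd t Gt. apply (diff_quot_lim_continuous _ _ _ (d t)), curve_deriv_iff, Hd, Gt.
Qed.

Lemma cont_on_lim_within (G : C -> Prop) (f : C -> C) :
  cont_on G f -> forall t, G t -> lim_within G f t (f t).
Proof. intros Hf t Gt. apply filterlim_within_iff, Hf, Gt. Qed.

Lemma curve_deriv_iter gam (alpha d dn : C -> C) n :
  jordan_smooth_param gam -> (forall t, curve gam t -> curve gam (alpha t)) ->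
  (forall x y, curve gam x -> curve gam y -> alpha x = alpha y -> x = y) ->
  (forall t, curve gam t -> curve_deriv (curve gam) alpha t (d t)) ->
  (forall t, curve gam t -> curve_deriv (curve gam) (Nat.iter n alpha) t (dn t)) ->
  forall t, curve gam t -> dn t = fm d alpha n t.
Proof.
  intros Hgam HG Hinj Hd Hdn t Gt.
  apply (lim_within_unique (punctured (curve gam) t) (diff_quot (Nat.iter n alpha) t) t).
  - apply curve_not_isolated; auto.
  - apply curve_deriv_iff, Hdn, Gt.
  - apply (iter_deriv (curve gam)); auto. intros y Gy. apply curve_deriv_iff, Hd, Gy.
Qed.

Lemma is_m_fixed_base gam (alpha alpha_inv : C -> C) m :
  jordan_smooth_param gam -> diffeo_on (curve gam) alpha alpha_inv ->
  (exists t, periodic_point (curve gam) alpha t) -> is_m gam alpha m ->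
  exists sp, Nat.iter m alpha (gam sp) = gam sp /\
             preserves_orientation gam (Nat.iter m alpha).
Proof.
  intros Hgam [HG [HGi [Hinv1 [Hinv2 [[d [_ Hd]] _]]]]] [t Ht] [[Hpres Hmult] | [Hrev ->]].
  - destruct (Hmult t Ht) as [_ [Hfix _]]. destruct Ht as [[sp <-] _].
    exists sp. split; auto. apply preserves_orientation_iter; auto.
  - destruct (reversing_fixed_point gam Hgam alpha alpha_inv) as [q [[sp <-] Hq]]; auto.
    + apply (curve_deriv_continuous _ _ d). intros y Gy. apply Hd, Gy.
    + exists sp. split; [simpl; rewrite !Hq; auto | apply changes_orientation_twice; auto].
Qed.

Theorem corollary5p2
  (gam : R -> C) (alpha alpha_inv : C -> C) (a b : C -> C)
  (aX bX : R) (m : nat) (dm : C -> C)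
  (Hgam : jordan_smooth_param gam)
  (Halpha : diffeo_on (curve gam) alpha alpha_inv)
  (Hper : exists t, periodic_point (curve gam) alpha t)
  (Hboyd : 0 <= aX <= bX /\ bX <= 1)
  (Ha : cont_on (curve gam) a) (Hb : cont_on (curve gam) b)
  (Hm : is_m gam alpha m)
  (Hdm : forall t, curve gam t -> curve_deriv (curve gam) (Nat.iter m alpha) t (dm t)) :
  (forall (i : nat) (k : Z) (t : C), (i = 0%nat \/ i = 1%nat) -> curve gam t ->
     eta_minus i a b alpha alpha_inv dm m aX bX t =
       eta_minus i a b alpha alpha_inv dm m aX bX (iterz alpha alpha_inv k t) /\
     eta_plus i a b alpha alpha_inv dm m aX bX t =
       eta_plus i a b alpha alpha_inv dm m aX bX (iterz alpha alpha_inv k t)) /\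
  (forall (j : nat) (k : Z) (t : C), (1 <= j <= 5)%nat -> curve gam t ->
     (Gam j gam a b alpha alpha_inv dm m aX bX t <->
      Gam j gam a b alpha alpha_inv dm m aX bX (iterz alpha alpha_inv k t))).
Proof.
  destruct (is_m_fixed_base gam alpha alpha_inv m) as [sp [Hfix Hpres]]; auto.
  destruct Halpha as [HG [HGi [Hinv1 [Hinv2 [[d1 [Cd1 Dd1]] [d2 [_ Dd2]]]]]]].
  assert (Hinj : forall x y, curve gam x -> curve gam y -> alpha x = alpha y -> x = y)
    by (intros x y Gx Gy E; rewrite <- (Hinv1 x), <- (Hinv1 y), E; auto).
  pose proof (curve_deriv_iter gam alpha d1 dm m Hgam HG Hinj
                (fun t Gt => proj1 (Dd1 t Gt)) Hdm).
  pose proof (curve_deriv_continuous _ _ _ (fun t Gt => proj1 (Dd1 t Gt))).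
  pose proof (curve_deriv_continuous _ _ _ (fun t Gt => proj1 (Dd2 t Gt))).
  pose proof (cont_on_lim_within _ _ Ha). pose proof (cont_on_lim_within _ _ Hb).
  pose proof (cont_on_lim_within _ _ Cd1).
  assert (Hd1n : forall y, curve gam y -> d1 y <> RtoC 0) by (intros y Gy; apply Dd1, Gy).
  split.
  - intros i k t _ Gt.
    split; symmetry; apply (iterz_invariant_eq (curve gam)); auto; intros s Gs;
      [apply eta_minus_alpha with (gam := gam) (d1 := d1) (sp := sp)
      | apply eta_plus_alpha with (gam := gam) (d1 := d1) (sp := sp)]; auto.
  - intros j k t _ Gt. apply (iterz_invariant (curve gam)); auto.
    intros s Gs. apply Gam_alpha with (gam := gam) (d1 := d1) (sp := sp); auto.
Qed.
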